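(* Let $\mathcal S$ be a convex Sawtooth model with $n$ upper particles, let $1\le s\le r$ and $t\in[0,1]$. Then $x\mapsto F_{X_s\mid X_r=x}(t)$ is nonincreasing (for $r\le n+1$) and $y\mapsto F_{X_s\mid Y_r=y}(t)$ is nonincreasing (for $r\le n$). Moreover, for $r\le n$ and all $x,y\in[0,1]$, $$F^{\mathcal S_{\to X_r}}_{X_s}(t)\le F_{X_s\mid Y_r=y}(t)\qquad\text{and}\qquad F^{\mathcal S_{\to Y_r}}_{X_s}(t)\ge F_{X_s\mid X_{r+1}=x}(t).$$
   Context: A (type $--$) Sawtooth model with $n\ge1$ upper particles is specified by functions $f_1,g_1,\dots,f_n,g_n:[0,1]\to[0,\infty)$, each nondecreasing, $C^1$ and not identically zero. It is the probability space $[0,1]^{n+1}\times[0,1]^n$ with probability density at $(x_1,\dots,x_{n+1},y_1,\dots,y_n)$ equal to $\frac{1}{\mathcal V}\prod_{i=1}^n\mathbf 1_{\{x_i\le y_i\}}\mathbf 1_{\{x_{i+1}\le y_i\}}f_i(y_i-x_i)\,g_i(y_i-x_{i+1})$, $\mathcal V$ being the normalizing constant. The coordinates $X_1,\dots,X_{n+1}$ are the lower particles and $Y_1,\dots,Y_n$ the upper particles (ordered $X_1,Y_1,X_2,\dots,Y_n,X_{n+1}$). The model is convex if every $f_i,g_i$ is positive on $(0,1]$ and log-concave, i.e. $f_i'/f_i$ and $g_i'/g_i$ are nonincreasing. Conditional cumulative distribution functions $F_{U\mid V=v}(t)=\mathbb P(U\le t\mid V=v)$ are computed from the joint density. For a particle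 $P$, $\mathcal S_{\to P}$ is the model obtained by keeping only the particles from $X_1$ up to $P$ and the interaction factors among them (if $P=Y_r$ the last factor is $f_r(y_r-x_r)$); $F^{\mathcal S_{\to P}}_U$ is the cumulative distribution function of particle $U$ in $\mathcal S_{\to P}$. *)

From Stdlib Require Import Reals Lra Lia Arith ClassicalEpsilon.
Open Scope R_scope.

(** Riemann integral of h over [a,b]; 0 by convention if h is not
    Riemann integrable (the value does not depend on the integrability proof). *)
Definition RInt (h : R -> R) (a b : R) : R :=
  match excluded_middle_informative
          (exists v : R, exists pr : Riemann_integrable h a b, RiemannInt pr = v) with
  | left H => proj1_sig (constructive_indefinite_description _ H)
  | right _ => 0
  end.

Definition upd (z : nat -> R) (k : nat) (u : R) : nat -> R :=
  fun i => if Nat.eqb i k then u else z i.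

(** Iterated integral over [0,1] of F w.r.t. the coordinates i < k with sel i = true
    (coordinate 0 innermost); the other coordinates are taken from env. *)
Fixpoint iint (sel : nat -> bool) (k : nat) (F : (nat -> R) -> R) (env : nat -> R) : R :=
  match k with
  | O => F env
  | S k' => if sel k'
            then RInt (fun u => iint sel k' F (upd env k' u)) 0 1
            else iint sel k' F env
  end.

Definition ind (a b : R) : R := if Rle_dec a b then 1 else 0.

(** Particles are stored in the order X_1,Y_1,X_2,...,Y_n,X_{n+1} as coordinates
    z 0, z 1, ..., z (2n).  With 1-indexed particles: X_s is coordinate 2(s-1),
    Y_r is coordinate 2r-1.  f i, g i (i = 0..n-1) stand for f_{i+1}, g_{i+1}. *)
Definition posX (s : nat) : nat := 2 * (s - 1).
Definition posY (r : nat) : nat := 2 * r - 1.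

Definition edge (f g : nat -> R -> R) (e : nat) (z : nat -> R) : R :=
  if Nat.even e
  then ind (z e) (z (S e)) * f (Nat.div2 e) (z (S e) - z e)
  else ind (z (S e)) (z e) * g (Nat.div2 e) (z e - z (S e)).

Fixpoint W (f g : nat -> R -> R) (m : nat) (z : nat -> R) : R :=
  match m with
  | O => 1
  | S m' => W f g m' z * edge f g m' z
  end.

(** Conditional CDF  P(X_s <= t | particle at coordinate j = v) in the full model
    with n upper particles: ratio of the partially integrated density. *)
Definition condNum (n : nat) (f g : nat -> R -> R) (s j : nat) (v t : R) : R :=
  iint (fun i => negb (Nat.eqb i j)) (2 * n + 1)
       (fun z => W f g (2 * n) z * ind (z (posX s)) t) (fun i => v).
Definition condDen (n : nat) (f g : nat -> R -> R) (j : nat) (v : R) : R :=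
  iint (fun i => negb (Nat.eqb i j)) (2 * n + 1) (W f g (2 * n)) (fun i => v).
Definition condCDF (n : nat) (f g : nat -> R -> R) (s j : nat) (v t : R) : R :=
  condNum n f g s j v t / condDen n f g j v.

(** CDF of X_s in the truncated model S_{->P}, where P is the particle at
    coordinate m (so the truncated model has links 0..m-1 and coordinates 0..m). *)
Definition truncCDF (f g : nat -> R -> R) (m s : nat) (t : R) : R :=
  iint (fun _ => true) (m + 1) (fun z => W f g m z * ind (z (posX s)) t) (fun _ => 0)
  / iint (fun _ => true) (m + 1) (W f g m) (fun _ => 0).

Definition in01 (x : R) : Prop := 0 <= x <= 1.

Definition C1_on01 (h dh : R -> R) : Prop :=
  (forall x, in01 x -> forall eps, 0 < eps -> exists delta, 0 < delta /\
     forall y, in01 y -> y <> x -> Rabs (y - x) < delta ->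
       Rabs ((h y - h x) / (y - x) - dh x) < eps) /\
  (forall x, in01 x -> forall eps, 0 < eps -> exists delta, 0 < delta /\
     forall y, in01 y -> Rabs (y - x) < delta -> Rabs (dh y - dh x) < eps).

(** Admissible interaction function of a convex Sawtooth model: nonnegative,
    nondecreasing, C^1 on [0,1], not identically zero, positive on (0,1] and
    log-concave (h'/h nonincreasing on (0,1]). *)
Definition convex_factor (h : R -> R) : Prop :=
  (forall x, in01 x -> 0 <= h x) /\
  (forall a b, in01 a -> in01 b -> a <= b -> h a <= h b) /\
  (exists x, in01 x /\ h x <> 0) /\
  (forall x, 0 < x <= 1 -> 0 < h x) /\
  (exists dh, C1_on01 h dh /\
     forall a b, 0 < a -> a <= b -> b <= 1 -> dh b / h b <= dh a / h a).

(* Integrating the density of the chain X_1, Y_1, ..., X_{n+1} from the left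
   produces at every coordinate a forward message, a function of the position
   of that particle obtained from the previous one by integrating against the
   kernel of the link.  Conditional CDFs of X_s given a later particle P are
   ratios num/den of the messages at P computed with and without the factor
   1{X_s <= t} (the part of the chain right of P cancels), and CDFs of
   truncated models are ratios of their integrals.  Log-concavity of f_i, g_i
   makes every kernel totally positive of order 2, and a single-crossing
   argument shows that integrating against such a kernel preserves the
   monotonicity of num/den; as num/den = 1{w <= t} at X_s, it is nonincreasing
   at every later particle.  The comparisons with truncated models are the same
   argument for the pair (last kernel, constant 1): since f_i, g_i are
   nondecreasing, the last kernel is monotone in the previous particle. *)

From Pilot Require Import Defs.
From Stdlib Require Import Reals Lra Lia ClassicalEpsilon Classical FunctionalExtensionality.
From Coquelicot Require Import Coquelicot.
Open Scope R_scope.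

Ltac destruct_Rle_dec := repeat match goal with
  | |- context [Rle_dec ?a ?b] => destruct (Rle_dec a b)
  | H : context [Rle_dec ?a ?b] |- _ => destruct (Rle_dec a b) end.

Lemma Rmin_Rmax_01 : Rmin 0 1 = 0 /\ Rmax 0 1 = 1.
Proof. split; [apply Rmin_left | apply Rmax_right]; lra. Qed.

Lemma ind_01 a b : 0 <= Defs.ind a b <= 1.
Proof. unfold Defs.ind. destruct Rle_dec; lra. Qed.

Lemma Rdiv_le_cross a b c d : 0 < b -> 0 < d -> a * d <= c * b -> a / b <= c / d.
Proof.
  intros Hb Hd H. apply Rmult_le_reg_r with (b * d); [nra|].
  replace (a / b * (b * d)) with (a * d) by (field; lra).
  replace (c / d * (b * d)) with (c * b) by (field; lra). lra.
Qed.

(* Real-valued instances of Coquelicot's lemmas on module-valued integrals,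
   stated so that [rewrite] and [apply] find them. *)
Lemma RInt_Chasles_R (h : R -> R) a b c : ex_RInt h a b -> ex_RInt h b c ->
  RInt h a b + RInt h b c = RInt h a c.
Proof. exact (RInt_Chasles h a b c). Qed.

Lemma ex_RInt_continuous_R (h : R -> R) a b : (forall x, continuous h x) -> ex_RInt h a b.
Proof. intro H. apply (ex_RInt_continuous h a b). auto. Qed.

Lemma RInt_scal_R (h : R -> R) a b c :
  ex_RInt h a b -> RInt (fun u => c * h u) a b = c * RInt h a b.
Proof. exact (RInt_scal h a b c). Qed.

Lemma RInt_minus_R (h h' : R -> R) a b : ex_RInt h a b -> ex_RInt h' a b ->
  RInt (fun u => h u - h' u) a b = RInt h a b - RInt h' a b.
Proof. exact (RInt_minus h h' a b). Qed.

Lemma RInt_const_R a b (c : R) : RInt (fun _ => c) a b = (b - a) * c.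
Proof. exact (RInt_const a b c). Qed.

Lemma RInt_def_ex (h : R -> R) a b : ex_RInt h a b -> Defs.RInt h a b = RInt h a b.
Proof.
  intro H. unfold Defs.RInt. destruct excluded_middle_informative as [E|E].
  - destruct constructive_indefinite_description as [v [pr Hv]]. cbn.
    rewrite <- Hv. symmetry. apply RInt_Reals.
  - exfalso; apply E. exists (RiemannInt (ex_RInt_Reals_0 _ _ _ H)).
    exists (ex_RInt_Reals_0 _ _ _ H). reflexivity.
Qed.

Lemma RInt_def_nex (h : R -> R) a b : ~ ex_RInt h a b -> Defs.RInt h a b = 0.
Proof.
  intro H. unfold Defs.RInt. destruct excluded_middle_informative as [E|E]; auto.
  exfalso. destruct E as [v [pr _]]. apply H. apply ex_RInt_Reals_1. exact pr.
Qed.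

Lemma RInt_def_ext (h h' : R -> R) : (forall u, 0 < u < 1 -> h u = h' u) ->
  Defs.RInt h 0 1 = Defs.RInt h' 0 1.
Proof.
  intro E. destruct Rmin_Rmax_01 as [m0 m1].
  assert (E' : forall x, Rmin 0 1 < x < Rmax 0 1 -> h x = h' x) by (rewrite m0, m1; auto).
  destruct (classic (ex_RInt h 0 1)) as [H|H].
  - rewrite !RInt_def_ex; [apply RInt_ext; auto | | auto]. apply ex_RInt_ext with h; auto.
  - rewrite !RInt_def_nex; auto. intro H'. apply H. apply ex_RInt_ext with h'; auto.
    intros x Hx; symmetry; auto.
Qed.

Lemma RInt_def_const c : Defs.RInt (fun _ => c) 0 1 = c.
Proof. rewrite RInt_def_ex by apply ex_RInt_const. rewrite RInt_const_R. ring. Qed.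

Lemma RInt_def_mulr (h : R -> R) c : Defs.RInt (fun u => h u * c) 0 1 = Defs.RInt h 0 1 * c.
Proof.
  destruct (Req_dec c 0) as [->|Hc].
  - rewrite Rmult_0_r. transitivity (Defs.RInt (fun _ => 0) 0 1).
    + apply RInt_def_ext. intros; ring.
    + apply RInt_def_const.
  - destruct (classic (ex_RInt h 0 1)) as [H|H].
    + assert (Hc' : ex_RInt (fun u => h u * c) 0 1).
      { apply (ex_RInt_ext (V := R_CompleteNormedModule) (fun u => c * h u));
          [intros; apply Rmult_comm | exact (ex_RInt_scal h 0 1 c H)]. }
      rewrite !RInt_def_ex; auto.
      rewrite (RInt_ext _ (fun u => c * h u)) by (intros; cbn; ring).
      rewrite RInt_scal_R by auto. ring.
    + rewrite (RInt_def_nex h 0 1 H), RInt_def_nex; [ring|]. intro H2. apply H.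
      apply (ex_RInt_ext (V := R_CompleteNormedModule) (fun u => / c * (h u * c)));
        [intros; cbn; field; auto|].
      exact (ex_RInt_scal _ 0 1 (/ c) H2).
Qed.

Lemma RInt_def_ge0 (h : R -> R) : (forall u, 0 < u < 1 -> 0 <= h u) -> 0 <= Defs.RInt h 0 1.
Proof.
  intro P. destruct (classic (ex_RInt h 0 1)) as [H|H].
  - rewrite RInt_def_ex; auto. apply RInt_ge_0; auto; lra.
  - rewrite RInt_def_nex; auto; lra.
Qed.

Lemma upd_eq z k u : upd z k u k = u.
Proof. unfold upd. rewrite Nat.eqb_refl. reflexivity. Qed.

Lemma upd_neq z k u i : i <> k -> upd z k u i = z i.
Proof. intro H. unfold upd. destruct (Nat.eqb_spec i k); [contradiction|reflexivity]. Qed.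

Definition all01 (z : nat -> R) := forall i, in01 (z i).

Lemma all01_upd z k u : all01 z -> in01 u -> all01 (upd z k u).
Proof. intros H Hu i. unfold upd. destruct (i =? k)%nat; auto. Qed.

Lemma all01_const v : in01 v -> all01 (fun _ => v).
Proof. intros Hv i. exact Hv. Qed.

Lemma iint_mulr sel k F c env :
  (forall z i u, (i < k)%nat -> sel i = true -> c (upd z i u) = c z) ->
  iint sel k (fun z => F z * c z) env = iint sel k F env * c env.
Proof.
  revert env. induction k as [|k IH]; intros env Hc; cbn [iint]; auto.
  destruct (sel k) eqn:Hs; [|apply IH; auto].
  rewrite <- RInt_def_mulr. f_equal. apply functional_extensionality. intro u.
  rewrite IH by auto. rewrite Hc; auto.
Qed.

Lemma iint_sel_ext sel sel' k F env : (forall i, (i < k)%nat -> sel i = sel' i) ->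
  iint sel k F env = iint sel' k F env.
Proof.
  revert env. induction k as [|k IH]; intros env H; cbn [iint]; auto.
  rewrite <- (H k) by lia. destruct (sel k); [f_equal; apply functional_extensionality; intro u|];
  apply IH; auto.
Qed.

Lemma iint_indep sel k F env :
  (forall z i u, (i < k)%nat -> sel i = true -> F (upd z i u) = F z) ->
  iint sel k F env = F env.
Proof.
  revert env. induction k as [|k IH]; intros env H; cbn [iint]; auto.
  destruct (sel k) eqn:Hs; [|auto].
  rewrite <- (RInt_def_const (F env)). f_equal. apply functional_extensionality. intro u.
  rewrite IH by auto. auto.
Qed.

Definition clamp (x : R) : R := Rmax 0 (Rmin 1 x).

Lemma clamp_id x : in01 x -> clamp x = x.
Proof. intros [H1 H2]. unfold clamp. rewrite Rmin_right by lra. rewrite Rmax_right; lra. Qed.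

Lemma clamp_01 x : in01 (clamp x).
Proof. unfold in01, clamp, Rmax, Rmin. destruct_Rle_dec; lra. Qed.

Lemma clamp_le x y : x <= y -> clamp x <= clamp y.
Proof. unfold clamp, Rmax, Rmin. destruct_Rle_dec; lra. Qed.

(* [edge] as a function of (z_e, z_{e+1}); extending f and g constantly
   outside [0,1] makes the interaction factor continuous on the whole plane. *)
Definition kern (f g : nat -> R -> R) (e : nat) (u w : R) : R :=
  if Nat.even e then Defs.ind u w * f (Nat.div2 e) (clamp (w - u))
  else Defs.ind w u * g (Nat.div2 e) (clamp (u - w)).

(* With b = true the event {X_s <= t} of a CDF numerator is attached to X_s;
   with b = false (denominators) nothing is. *)
Definition obs (s : nat) (t : R) (b : bool) (k : nat) (w : R) : R :=
  if (b && Nat.eqb k (posX s))%bool then Defs.ind w t else 1.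

(* Forward message: the density W * obs integrated over coordinates 0..k-1,
   as a function of z_k. *)
Fixpoint msg (f g : nat -> R -> R) (s : nat) (t : R) (b : bool) (k : nat) (w : R) : R :=
  match k with
  | O => obs s t b 0 w
  | S k' => Defs.RInt (fun u => msg f g s t b k' u * kern f g k' u w) 0 1 * obs s t b (S k') w
  end.

Definition obs_upto (s : nat) (t : R) (b : bool) (k : nat) (z : nat -> R) : R :=
  if (b && Nat.leb (posX s) k)%bool then Defs.ind (z (posX s)) t else 1.

Lemma edge_kern f g e z : in01 (z e) -> in01 (z (S e)) -> edge f g e z = kern f g e (z e) (z (S e)).
Proof.
  intros H1 H2. unfold edge, kern. destruct (Nat.even e); unfold Defs.ind; destruct_Rle_dec; try ring;
  rewrite clamp_id; auto; unfold in01 in *; lra.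
Qed.

Lemma edge_upd f g e z i u : (i < e)%nat -> edge f g e (upd z i u) = edge f g e z.
Proof. intro H. unfold edge. rewrite !upd_neq by lia. reflexivity. Qed.

Lemma obs_upto_S s t b k z : obs_upto s t b (S k) z = obs_upto s t b k z * obs s t b (S k) (z (S k)).
Proof.
  unfold obs_upto, obs. destruct b; cbn [andb]; [|ring].
  destruct (Nat.leb_spec (posX s) (S k)); destruct (Nat.leb_spec (posX s) k);
  destruct (Nat.eqb_spec (S k) (posX s)); try lia; try ring. rewrite e. ring.
Qed.

Lemma iint_msg f g s t b : forall k env, all01 env ->
  iint (fun _ => true) k (fun z => W f g k z * obs_upto s t b k z) env = msg f g s t b k (env k).
Proof.
  induction k as [|k IH]; intros env He.
  - cbn [iint W msg]. unfold obs_upto, obs. destruct b; cbn [andb]; [|ring].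
    destruct (Nat.leb_spec (posX s) 0); destruct (Nat.eqb_spec 0 (posX s)); try lia; try ring.
    rewrite <- e. ring.
  - cbn [iint msg]. rewrite <- RInt_def_mulr. apply RInt_def_ext. intros u Hu.
    transitivity (iint (fun _ => true) k (fun z => (W f g k z * obs_upto s t b k z) *
                    (edge f g k z * obs s t b (S k) (z (S k)))) (upd env k u)).
    { f_equal. apply functional_extensionality. intro z. cbn [W]. rewrite obs_upto_S. ring. }
    rewrite iint_mulr.
    2: { intros z i v Hi _. rewrite edge_upd, upd_neq by lia. reflexivity. }
    rewrite IH by (apply all01_upd; auto; red; lra).
    rewrite edge_kern; rewrite ?upd_eq, ?upd_neq by lia; [ring | red; lra | apply He].
Qed.

Fixpoint W_from (f g : nat -> R -> R) (a d : nat) (z : nat -> R) : R :=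
  match d with O => 1 | S d' => W_from f g a d' z * edge f g (a + d') z end.

Lemma W_add f g a d z : W f g (a + d) z = W f g a z * W_from f g a d z.
Proof.
  induction d as [|d IH]; cbn [W_from].
  - rewrite Nat.add_0_r. ring.
  - rewrite Nat.add_succ_r. cbn [W]. rewrite IH. ring.
Qed.

Lemma W_from_upd f g a d z i u : (i < a)%nat -> W_from f g a d (upd z i u) = W_from f g a d z.
Proof. intro H. induction d as [|d IH]; cbn [W_from]; auto. rewrite IH, edge_upd by lia. auto. Qed.

Definition allbut (j : nat) : nat -> bool := fun i => negb (Nat.eqb i j).

(* Integrating out everything except coordinate j: the coordinates left of j
   only see A, whose partial integral a depends on z_j alone, and factor out. *)
Lemma iint_allbut_mul (j : nat) (A B : (nat -> R) -> R) (a : R -> R) :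
  (forall env, all01 env -> iint (fun _ => true) j A env = a (env j)) ->
  (forall z i u, (i < j)%nat -> B (upd z i u) = B z) ->
  forall d env, all01 env ->
  iint (allbut j) (S j + d) (fun z => A z * B z) env = iint (allbut j) (S j + d) B env * a (env j).
Proof.
  intros HA HB d. induction d as [|d IH]; intros env He.
  - rewrite Nat.add_0_r. cbn [iint].
    assert (Hj : allbut j j = false) by (unfold allbut; rewrite Nat.eqb_refl; auto). rewrite !Hj.
    assert (Hsel : forall i, (i < j)%nat -> allbut j i = true).
    { intros i Hi. unfold allbut. destruct (Nat.eqb_spec i j); auto; lia. }
    rewrite !(iint_sel_ext (allbut j) (fun _ => true)) by auto.
    rewrite iint_mulr by auto. rewrite HA, (iint_indep _ j B) by auto. ring.
  - rewrite Nat.add_succ_r. cbn [iint].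
    assert (Hs : allbut j (S j + d) = true).
    { unfold allbut. destruct (Nat.eqb_spec (S j + d) j); auto; lia. }
    rewrite Hs, <- RInt_def_mulr. apply RInt_def_ext. intros u Hu.
    rewrite IH by (apply all01_upd; auto; red; lra). rewrite upd_neq by lia. reflexivity.
Qed.

(* The part of the chain right of coordinate j; it cancels in conditional CDFs. *)
Definition right_weight n f g j v := iint (allbut j) (2 * n + 1) (W_from f g j (2 * n - j)) (fun _ => v).

Lemma iint_allbut_msg n f g s t b j v : (j <= 2 * n)%nat -> in01 v ->
  iint (allbut j) (2 * n + 1) (fun z => W f g (2 * n) z * obs_upto s t b j z) (fun _ => v)
  = right_weight n f g j v * msg f g s t b j v.
Proof.
  intros Hj Hv. unfold right_weight.
  replace (2 * n + 1)%nat with (S j + (2 * n - j))%nat by lia.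
  transitivity (iint (allbut j) (S j + (2 * n - j))
    (fun z => (W f g j z * obs_upto s t b j z) * W_from f g j (2 * n - j) z) (fun _ => v)).
  { f_equal. apply functional_extensionality; intro z.
    replace (2 * n)%nat with (j + (2 * n - j))%nat at 1 by lia. rewrite W_add. ring. }
  rewrite (iint_allbut_mul j _ _ (msg f g s t b j)); auto using all01_const.
  - intros env He. apply iint_msg; auto.
  - intros; apply W_from_upd; auto.
Qed.

Lemma cond_msg n f g s t j v : (posX s <= j)%nat -> (j <= 2 * n)%nat -> in01 v ->
  condNum n f g s j v t = right_weight n f g j v * msg f g s t true j v /\
  condDen n f g j v = right_weight n f g j v * msg f g s t false j v.
Proof.
  intros H1 H2 Hv. unfold condNum, condDen.
  rewrite <- !iint_allbut_msg by auto. unfold obs_upto; cbn [andb].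
  destruct (Nat.leb_spec (posX s) j); [|lia].
  split; f_equal; apply functional_extensionality; intro z; ring.
Qed.

Lemma truncCDF_msg f g m s t : (posX s <= m)%nat ->
  truncCDF f g m s t = Defs.RInt (msg f g s t true m) 0 1 / Defs.RInt (msg f g s t false m) 0 1.
Proof.
  intro H. unfold truncCDF. replace (m + 1)%nat with (S m) by lia. cbn [iint].
  assert (Hb : forall b, Defs.RInt (fun u => iint (fun _ => true) m
                 (fun z => W f g m z * obs_upto s t b m z) (upd (fun _ => 0) m u)) 0 1
               = Defs.RInt (msg f g s t b m) 0 1).
  { intro b. apply RInt_def_ext. intros u Hu.
    rewrite iint_msg, upd_eq; auto. apply all01_upd; [apply all01_const|]; red; lra. }
  rewrite <- !Hb. unfold obs_upto; cbn [andb].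
  destruct (Nat.leb_spec (posX s) m); [|lia].
  f_equal; f_equal; apply functional_extensionality; intro u; f_equal;
  apply functional_extensionality; intro z; ring.
Qed.

Lemma continuous_eps_delta (h : R -> R) x0 : continuous h x0 <->
  forall eps, 0 < eps -> exists d, 0 < d /\ forall y, Rabs (y - x0) < d -> Rabs (h y - h x0) < eps.
Proof.
  unfold continuous. rewrite filterlim_locally. split.
  - intros H eps He. destruct (H (mkposreal eps He)) as [d Hd].
    exists d. split; [apply cond_pos|]. intros y Hy. apply Hd. exact Hy.
  - intros H eps. destruct (H eps (cond_pos eps)) as [d [Hd Hy]].
    exists (mkposreal d Hd). intros y Hb. apply Hy. exact Hb.
Qed.

Lemma continuous_Rmax (p q : R -> R) x :
  continuous p x -> continuous q x -> continuous (fun w => Rmax (p w) (q w)) x.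
Proof.
  intros Hp Hq.
  apply (continuous_ext (fun w => (p w + q w + Rabs (p w - q w)) * / 2)).
  { intro w. unfold Rmax, Rabs. destruct Rle_dec, Rcase_abs; lra. }
  apply (continuous_mult (fun w => p w + q w + Rabs (p w - q w)) (fun _ => / 2));
    [|apply continuous_const].
  apply (continuous_plus (fun w => p w + q w)); [apply (continuous_plus p q); auto|].
  apply (continuous_comp (fun w => p w - q w) Rabs);
    [apply (continuous_minus p q); auto | apply continuous_Rabs].
Qed.

Lemma continuous_Rmin (p q : R -> R) x :
  continuous p x -> continuous q x -> continuous (fun w => Rmin (p w) (q w)) x.
Proof.
  intros Hp Hq. apply (continuous_ext (fun w => - Rmax (- p w) (- q w))).
  { intro w. unfold Rmax, Rmin. destruct Rle_dec, Rle_dec; lra. }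
  apply (continuous_opp (fun w => Rmax (- p w) (- q w))).
  apply continuous_Rmax; [apply (continuous_opp p) | apply (continuous_opp q)]; auto.
Qed.

Lemma continuous_clamp (p : R -> R) x : continuous p x -> continuous (fun w => clamp (p w)) x.
Proof.
  intro Hp. unfold clamp. apply continuous_Rmax; [apply continuous_const|].
  apply continuous_Rmin; [apply continuous_const | auto].
Qed.

Lemma continuous_bounded (c : R -> R) a b : (forall x, continuous c x) ->
  exists M, 0 <= M /\ forall u, a <= u <= b -> Rabs (c u) <= M.
Proof.
  intro Hc. destruct (Rle_or_lt a b) as [Hab|Hab].
  - destruct (continuity_ab_maj (fun u => Rabs (c u)) a b Hab) as [Mx [HM _]].
    + intros x _. apply continuity_pt_filterlim.
      apply (continuous_comp c Rabs); [apply Hc | apply continuous_Rabs].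
    + exists (Rabs (c Mx)). split; [apply Rabs_pos | auto].
  - exists 0. split; [lra|]. intros; lra.
Qed.

Lemma continuous_unif (k : R -> R) a b : (forall x, continuous k x) -> forall eps, 0 < eps ->
  exists d, 0 < d /\ forall x y, a <= x <= b -> a <= y <= b -> Rabs (y - x) < d ->
    Rabs (k y - k x) < eps.
Proof.
  intros Hk eps He. destruct (unifcont_1d k a b (fun x _ => Hk x) (mkposreal eps He)) as [d Hd].
  exists d. split; [apply cond_pos|]. intros x y Hx Hy Hxy.
  apply NNPP. intro N. apply (Hd x y Hx Hy Hxy). intro B. apply N. exact B.
Qed.

Lemma RInt_ext_ab (h h' : R -> R) a b : a <= b -> (forall x, a < x < b -> h x = h' x) ->
  ex_RInt h a b -> ex_RInt h' a b /\ RInt h' a b = RInt h a b.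
Proof.
  intros Hab E H.
  assert (E' : forall x, Rmin a b < x < Rmax a b -> h x = h' x)
    by (rewrite Rmin_left, Rmax_right by auto; auto).
  split; [apply ex_RInt_ext with h; auto | symmetry; apply RInt_ext; auto].
Qed.

Lemma RInt_zero_ab (h : R -> R) a b : a <= b -> (forall x, a < x < b -> h x = 0) ->
  ex_RInt h a b /\ RInt h a b = 0.
Proof.
  intros Hab E. destruct (RInt_ext_ab (fun _ => 0) h a b Hab) as [X Y];
    [intros x Hx; symmetry; auto | apply ex_RInt_const |].
  split; auto. rewrite Y, RInt_const_R. apply Rmult_0_r.
Qed.

Lemma RInt_window (phi : R -> R) p q : (forall x, continuous phi x) ->
  ex_RInt (fun u => phi u * Defs.ind p u * Defs.ind u q) 0 1 /\
  RInt (fun u => phi u * Defs.ind p u * Defs.ind u q) 0 1 = RInt phi (clamp p) (clamp (Rmax p q)).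
Proof.
  intro Hc. set (P := clamp p). set (Q := clamp (Rmax p q)).
  assert (HP := clamp_01 p). assert (HQ := clamp_01 (Rmax p q)).
  assert (HPQ : P <= Q) by (apply clamp_le; apply Rmax_l).
  fold P Q in HP, HQ. unfold in01 in HP, HQ.
  set (F := fun u => phi u * Defs.ind p u * Defs.ind u q).
  assert (Hcut : forall x, P < x < Q -> phi x = F x).
  { intros x Hx. unfold F, Defs.ind, P, Q, clamp, Rmax, Rmin in *. destruct_Rle_dec; lra. }
  destruct (RInt_zero_ab F 0 P) as [X1 Y1]; [lra| |].
  { intros x Hx. unfold F, Defs.ind, P, clamp, Rmax, Rmin in *. destruct_Rle_dec; lra. }
  destruct (RInt_ext_ab phi F P Q HPQ Hcut) as [X2 Y2]; [apply ex_RInt_continuous_R; auto|].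
  destruct (RInt_zero_ab F Q 1) as [X3 Y3]; [lra| |].
  { intros x Hx. unfold F, Defs.ind, Q, clamp, Rmax, Rmin in *. destruct_Rle_dec; lra. }
  assert (X12 : ex_RInt F 0 Q) by (apply ex_RInt_Chasles with P; auto).
  split; [apply ex_RInt_Chasles with Q; auto|].
  rewrite <- (RInt_Chasles_R F 0 Q 1), <- (RInt_Chasles_R F 0 P Q), Y1, Y2, Y3 by auto.
  rewrite Rplus_0_l, Rplus_0_r. reflexivity.
Qed.

Lemma continuous_RInt_bounds (phi al be : R -> R) w0 :
  (forall x, continuous phi x) -> continuous al w0 -> continuous be w0 ->
  continuous (fun w => RInt phi (al w) (be w)) w0.
Proof.
  intros Hphi Hal Hbe.
  set (Psi := fun x => (RInt phi 0 x : R)).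
  assert (Hex : forall a b, ex_RInt phi a b) by (intros; apply ex_RInt_continuous_R; auto).
  assert (HPsi : forall x, continuous Psi x).
  { intro x. apply (continuous_RInt_1 phi 0 x Psi). apply filter_forall. intro z.
    unfold Psi. apply (RInt_correct phi 0 z). auto. }
  apply (continuous_ext (fun w => Psi (be w) - Psi (al w))).
  { intro w. unfold Psi. rewrite <- (RInt_Chasles_R phi 0 (al w) (be w)) by auto.
    lra. }
  apply (continuous_minus (fun w => Psi (be w)) (fun w => Psi (al w)));
    apply continuous_comp; auto.
Qed.

Lemma continuous_conv_integrand (c k : R -> R) w x :
  (forall x, continuous c x) -> (forall x, continuous k x) ->
  continuous (fun u => c u * k (w - u)) x.
Proof.
  intros Hc Hk. apply (continuous_mult c (fun u => k (w - u))); auto.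
  apply (continuous_comp (fun u => w - u) k); auto.
  apply (continuous_minus (fun _ => w) (fun u => u)); [apply continuous_const | apply continuous_id].
Qed.

Lemma continuous_RInt_conv (c k al be : R -> R) :
  (forall x, continuous c x) -> (forall x, continuous k x) ->
  (forall x, continuous al x) -> (forall x, continuous be x) ->
  (forall w, 0 <= al w /\ al w <= be w /\ be w <= 1) ->
  forall w0, continuous (fun w => RInt (fun u => c u * k (w - u)) (al w) (be w)) w0.
Proof.
  intros Hc Hk Hal Hbe Hab w0. apply continuous_eps_delta. intros eps He.
  assert (Hex : forall w a b, ex_RInt (fun u => c u * k (w - u)) a b)
    by (intros; apply ex_RInt_continuous_R; intro; apply continuous_conv_integrand; auto).
  destruct (continuous_bounded c 0 1 Hc) as [Mc [HMc HcM]].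
  set (eps1 := eps / (2 * (Mc + 1))).
  assert (He1 : 0 < eps1) by (unfold eps1; apply Rdiv_lt_0_compat; lra).
  assert (HM : Mc * eps1 <= eps / 2).
  { unfold eps1. apply Rmult_le_reg_r with (2 * (Mc + 1)); [lra|].
    replace (Mc * (eps / (2 * (Mc + 1))) * (2 * (Mc + 1))) with (Mc * eps) by (field; lra).
    nra. }
  destruct (continuous_unif k (w0 - 2) (w0 + 2) Hk eps1 He1) as [d1 [Hd1 Hu]].
  (* Freezing the parameter at w0 leaves only the bounds moving. *)
  set (T := fun w => (RInt (fun u => c u * k (w0 - u)) (al w) (be w) : R)).
  assert (HT : continuous T w0)
    by (apply continuous_RInt_bounds; auto; intro; apply continuous_conv_integrand; auto).
  destruct (proj1 (continuous_eps_delta T w0) HT (eps / 2)) as [d2 [Hd2 HT2]]; [lra|].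
  exists (Rmin d1 (Rmin d2 1)). split; [apply Rmin_pos; [|apply Rmin_pos]; lra|].
  intros y Hy.
  pose proof (Rmin_l d1 (Rmin d2 1)). pose proof (Rmin_r d1 (Rmin d2 1)).
  pose proof (Rmin_l d2 1). pose proof (Rmin_r d2 1).
  assert (Hy3 : Rabs (y - w0) < 1) by lra. apply Rabs_def2 in Hy3.
  destruct (Hab y) as [A1 [A2 A3]].
  set (I := (RInt (fun u => c u * k (y - u) - c u * k (w0 - u)) (al y) (be y) : R)).
  assert (Dif : RInt (fun u => c u * k (y - u)) (al y) (be y) = I + T y).
  { unfold I, T; rewrite RInt_minus_R by apply Hex. lra. }
  assert (Bd : Rabs I <= eps / 2).
  { apply Rle_trans with ((be y - al y) * (Mc * eps1)); [|nra].
    apply abs_RInt_le_const;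
      [lra | apply (ex_RInt_minus (fun u => c u * k (y - u)) (fun u => c u * k (w0 - u))); apply Hex|].
    intros u Hu0.
    replace (c u * k (y - u) - c u * k (w0 - u)) with (c u * (k (y - u) - k (w0 - u))) by ring.
    rewrite Rabs_mult. apply Rmult_le_compat; try apply Rabs_pos; [apply HcM; lra|].
    apply Rlt_le, Hu; [lra | lra |]. replace (y - u - (w0 - u)) with (y - w0) by ring. lra. }
  pose proof (HT2 y ltac:(lra)) as HTy. fold (T w0). rewrite Dif.
  replace (I + T y - T w0) with (I + (T y - T w0)) by ring.
  eapply Rle_lt_trans; [apply Rabs_triang | lra].
Qed.

(* Forward messages have this shape; it makes them Riemann integrable, which
   matters because [Defs.RInt] is 0 on non-integrable functions. *)
Definition cut_continuous (h : R -> R) :=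
  exists c q, (forall x, continuous c x) /\ forall u, in01 u -> h u = c u * Defs.ind u q.

Lemma cut_continuous_ex_RInt h : cut_continuous h -> ex_RInt h 0 1.
Proof.
  intros [c [q [Hc Hh]]]. destruct (RInt_window c (-1) q Hc) as [X _].
  apply ex_RInt_ext with (2 := X). destruct Rmin_Rmax_01 as [-> ->]. intros u Hu.
  rewrite Hh by (red; lra). unfold Defs.ind. destruct_Rle_dec; lra.
Qed.

Lemma RInt_conv_window (c k p Q : R -> R) :
  (forall x, continuous c x) -> (forall x, continuous k x) ->
  (forall x, continuous p x) -> (forall x, continuous Q x) ->
  exists G, (forall x, continuous G x) /\ forall w,
    ex_RInt (fun u => c u * k (w - u) * Defs.ind (p w) u * Defs.ind u (Q w)) 0 1 /\
    RInt (fun u => c u * k (w - u) * Defs.ind (p w) u * Defs.ind u (Q w)) 0 1 = G w.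
Proof.
  intros Hc Hk Hp HQ.
  exists (fun w => RInt (fun u => c u * k (w - u)) (clamp (p w)) (clamp (Rmax (p w) (Q w)))).
  split.
  - apply continuous_RInt_conv; auto.
    + intro x. apply continuous_clamp; auto.
    + intro x. apply continuous_clamp, continuous_Rmax; auto.
    + intro w. pose proof (clamp_01 (p w)). pose proof (clamp_01 (Rmax (p w) (Q w))).
      pose proof (clamp_le (p w) (Rmax (p w) (Q w)) (Rmax_l _ _)). unfold in01 in *. lra.
  - intro w. apply RInt_window. intro x. apply continuous_conv_integrand; auto.
Qed.

Lemma kern_RInt_continuous (f g : nat -> R -> R) (e : nat) (h : R -> R) :
  (forall x, continuous (fun x => f (Nat.div2 e) (clamp x)) x) ->
  (forall x, continuous (fun x => g (Nat.div2 e) (clamp x)) x) ->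
  cut_continuous h ->
  exists G, (forall x, continuous G x) /\ forall w,
    ex_RInt (fun u => h u * kern f g e u w) 0 1 /\ RInt (fun u => h u * kern f g e u w) 0 1 = G w.
Proof.
  intros Hf Hg [c [q [Hc Hh]]].
  unfold kern. destruct (Nat.even e).
  - destruct (RInt_conv_window c (fun x => f (Nat.div2 e) (clamp x)) (fun _ => -1) (fun w => Rmin q w))
      as [G [HG HFG]]; auto using continuous_const.
    { intro x. apply continuous_Rmin; [apply continuous_const | apply continuous_id]. }
    exists G. split; auto. intro w. destruct (HFG w) as [X <-].
    apply RInt_ext_ab; auto; [lra|]. intros u Hu.
    rewrite Hh by (red; lra). unfold Defs.ind, Rmin. destruct_Rle_dec; lra.
  - destruct (RInt_conv_window c (fun x => g (Nat.div2 e) (clamp (- x))) (fun w => w) (fun _ => q))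
      as [G [HG HFG]]; auto using continuous_const, continuous_id.
    { intro x. apply (continuous_comp (fun x => - x) (fun y => g (Nat.div2 e) (clamp y)));
        [apply (continuous_opp (V := R_NormedModule) (fun x => x)), continuous_id | apply Hg]. }
    exists G. split; auto. intro w. destruct (HFG w) as [X <-].
    apply RInt_ext_ab; auto; [lra|]. intros u Hu.
    rewrite Hh by (red; lra). replace (- (w - u)) with (u - w) by ring.
    unfold Defs.ind. destruct_Rle_dec; lra.
Qed.

Lemma obs_ind s t b k : exists q, forall u, in01 u -> obs s t b k u = Defs.ind u q.
Proof.
  unfold obs. destruct (b && Nat.eqb k (posX s))%bool; [exists t; auto|].
  exists 2. intros u [H1 H2]. unfold Defs.ind. destruct_Rle_dec; lra.
Qed.

Lemma div2_lt k n : (k < 2 * n)%nat -> (Nat.div2 k < n)%nat.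
Proof. intro Hk. pose proof (Nat.div2_odd k). destruct (Nat.odd k); simpl Nat.b2n in *; lia. Qed.

Lemma msg_cut_continuous f g s t b n :
  (forall i, (i < n)%nat -> (forall x, continuous (fun x => f i (clamp x)) x) /\
                            (forall x, continuous (fun x => g i (clamp x)) x)) ->
  forall k, (k <= 2 * n)%nat -> cut_continuous (msg f g s t b k).
Proof.
  intros HC k. induction k as [|k IH]; intro Hk.
  - destruct (obs_ind s t b 0) as [q Hq]. exists (fun _ => 1), q.
    split; [intro; apply continuous_const|]. intros u Hu. cbn [msg]. rewrite Hq; auto. ring.
  - destruct (HC _ (div2_lt k n ltac:(lia))) as [H1 H2].
    destruct (kern_RInt_continuous f g k _ H1 H2 (IH ltac:(lia))) as [G [HG HGw]].
    destruct (obs_ind s t b (S k)) as [q Hq]. exists G, q. split; auto.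
    intros u Hu. cbn [msg]. destruct (HGw u) as [X Y]. rewrite RInt_def_ex, Y, Hq; auto.
Qed.

Lemma clamp_lipschitz x y : Rabs (clamp x - clamp y) <= Rabs (x - y).
Proof. unfold clamp, Rmax, Rmin. destruct_Rle_dec; unfold Rabs; repeat destruct Rcase_abs; lra. Qed.

Lemma C1_lipschitz_at (h dh : R -> R) x0 : C1_on01 h dh -> in01 x0 ->
  exists d, 0 < d /\ forall y, in01 y -> Rabs (y - x0) < d ->
    Rabs (h y - h x0) <= (Rabs (dh x0) + 1) * Rabs (y - x0).
Proof.
  intros [H1 _] Hx. destruct (H1 x0 Hx 1 ltac:(lra)) as [d [Hd Hy]].
  exists d. split; auto. intros y Hy01 Hyd.
  destruct (Req_dec y x0) as [->|E].
  - rewrite !Rminus_diag, Rabs_R0, Rmult_0_r. lra.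
  - pose proof (Hy y Hy01 E Hyd) as K.
    replace (h y - h x0) with (((h y - h x0) / (y - x0) - dh x0 + dh x0) * (y - x0))
      by (field; lra).
    rewrite Rabs_mult. apply Rmult_le_compat_r; [apply Rabs_pos|].
    eapply Rle_trans; [apply Rabs_triang | lra].
Qed.

Lemma C1_continuous_clamp (h dh : R -> R) :
  C1_on01 h dh -> forall x, continuous (fun x => h (clamp x)) x.
Proof.
  intros HC x. apply continuous_eps_delta. intros eps He.
  destruct (C1_lipschitz_at h dh (clamp x) HC (clamp_01 x)) as [d [Hd Hl]].
  set (B := Rabs (dh (clamp x)) + 1).
  assert (HB : 0 < B) by (unfold B; pose proof (Rabs_pos (dh (clamp x))); lra).
  exists (Rmin d (eps / B)). split; [apply Rmin_pos; auto; apply Rdiv_lt_0_compat; auto|].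
  intros y Hy. pose proof (clamp_lipschitz y x) as L.
  pose proof (Rmin_l d (eps / B)). pose proof (Rmin_r d (eps / B)).
  eapply Rle_lt_trans; [apply (Hl (clamp y) (clamp_01 y)); lra|]. fold B.
  apply Rle_lt_trans with (B * Rabs (y - x)); [apply Rmult_le_compat_l; lra|].
  apply Rmult_lt_reg_l with (/ B); [apply Rinv_0_lt_compat; auto|].
  rewrite <- Rmult_assoc, Rinv_l, Rmult_1_l by lra. unfold Rdiv in *. lra.
Qed.

Lemma C1_derivable_clamp (h dh : R -> R) x : C1_on01 h dh -> 0 < x < 1 ->
  derivable_pt_lim (fun x => h (clamp x)) x (dh x).
Proof.
  intros [H1 _] Hx eps He. destruct (H1 x ltac:(red; lra) eps He) as [d [Hd Hy]].
  assert (Hp : 0 < Rmin d (Rmin x (1 - x))) by (apply Rmin_pos; auto; apply Rmin_pos; lra).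
  exists (mkposreal _ Hp). intros k Hk Hkd. simpl in Hkd.
  pose proof (Rmin_l d (Rmin x (1 - x))). pose proof (Rmin_r d (Rmin x (1 - x))).
  pose proof (Rmin_l x (1 - x)). pose proof (Rmin_r x (1 - x)).
  assert (Ka : Rabs k < x) by lra. assert (Kb : Rabs k < 1 - x) by lra.
  apply Rabs_def2 in Ka. apply Rabs_def2 in Kb.
  rewrite !clamp_id by (red; lra).
  replace ((h (x + k) - h x) / k) with ((h (x + k) - h x) / ((x + k) - x)) by (f_equal; ring).
  apply Hy; [red; lra | lra |]. replace (x + k - x) with k by ring. lra.
Qed.

Lemma C1_reflect_mul_derive (h dh : R -> R) c x : C1_on01 h dh -> 0 < x < 1 -> 0 < c - x < 1 ->
  is_derive (fun x => h (clamp x) * h (clamp (c - x))) x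
            (dh x * h (clamp (c - x)) + h (clamp x) * (dh (c - x) * -1)).
Proof.
  intros HC Hx Hy. apply is_derive_Reals.
  apply (derivable_pt_lim_mult (fun x => h (clamp x)) (fun x => h (clamp (c - x))));
    [apply C1_derivable_clamp; auto|].
  apply (derivable_pt_lim_comp (fun x => c - x) (fun x => h (clamp x)));
    [|apply C1_derivable_clamp; auto].
  replace (-1) with (0 - 1) by ring.
  apply (derivable_pt_lim_minus (fct_cte c) id);
    [apply derivable_pt_lim_const | apply derivable_pt_lim_id].
Qed.

Lemma C1_reflect_mul_continuous (h dh : R -> R) c x : C1_on01 h dh ->
  continuity_pt (fun x => h (clamp x) * h (clamp (c - x))) x.
Proof.
  intro HC. apply continuity_pt_filterlim.
  apply (continuous_mult (fun x => h (clamp x)) (fun x => h (clamp (c - x))));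
    [apply C1_continuous_clamp with dh; auto|].
  apply (continuous_comp (fun x => c - x) (fun x => h (clamp x)));
    [|apply C1_continuous_clamp with dh; auto].
  apply (continuous_minus (fun _ => c) (fun x => x)); [apply continuous_const | apply continuous_id].
Qed.

Lemma logconcave_deriv_cross (h dh : R -> R) :
  (forall x, 0 < x <= 1 -> 0 < h x) ->
  (forall a b, 0 < a -> a <= b -> b <= 1 -> dh b / h b <= dh a / h a) ->
  forall x y, 0 < x -> x <= y -> y <= 1 -> dh y * h x <= dh x * h y.
Proof.
  intros Hpos Hlc x y Hx Hxy Hy.
  assert (Px : 0 < h x) by (apply Hpos; lra). assert (Py : 0 < h y) by (apply Hpos; lra).
  pose proof (Hlc x y Hx Hxy Hy) as L.
  apply Rmult_le_compat_r with (r := h x * h y) in L; [|nra].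
  replace (dh y / h y * (h x * h y)) with (dh y * h x) in L by (field; lra).
  replace (dh x / h x * (h x * h y)) with (dh x * h y) in L by (field; lra).
  exact L.
Qed.

(* F(x) = h(x) h(p+r-x) is nondecreasing for x <= (p+r)/2, because
   F'(x) = h'(x) h(y) - h(x) h'(y) >= 0 with y = p+r-x >= x. *)
Lemma logconcave_mul_le (h dh : R -> R) :
  C1_on01 h dh -> (forall x, 0 < x <= 1 -> 0 < h x) ->
  (forall a b, 0 < a -> a <= b -> b <= 1 -> dh b / h b <= dh a / h a) ->
  forall p q1 q2 r, 0 <= p -> p <= q1 -> q1 <= q2 -> q2 <= r -> r <= 1 -> p + r = q1 + q2 ->
  h p * h r <= h q1 * h q2.
Proof.
  intros HC Hpos Hlc p q1 q2 r H1 H2 H3 H4 H5 Hs.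
  destruct (Req_dec p q1) as [<-|E]; [replace r with q2 by lra; lra|].
  set (F := fun x => h (clamp x) * h (clamp (p + r - x))).
  set (D := fun x => dh x * h (clamp (p + r - x)) + h (clamp x) * (dh (p + r - x) * -1)).
  set (df := fun x => if Rlt_dec p x then if Rlt_dec x q1 then D x else 0 else 0).
  destruct (MVT_gen F p q1 df) as [xi [Hxi Heq]].
  - rewrite Rmin_left, Rmax_right by lra. intros x Hx. unfold df.
    destruct (Rlt_dec p x); [|lra]. destruct (Rlt_dec x q1); [|lra].
    apply C1_reflect_mul_derive; auto; lra.
  - intros. apply C1_reflect_mul_continuous with dh; auto.
  - rewrite Rmin_left, Rmax_right in Hxi by lra.
    assert (Hdf : 0 <= df xi).
    { unfold df. destruct (Rlt_dec p xi); [|lra]. destruct (Rlt_dec xi q1); [|lra].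
      unfold D. rewrite !clamp_id by (red; lra).
      pose proof (logconcave_deriv_cross h dh Hpos Hlc xi (p + r - xi) ltac:(lra) ltac:(lra) ltac:(lra)).
      lra. }
    unfold F in Heq. rewrite !clamp_id in Heq by (red; lra).
    replace (p + r - q1) with q2 in Heq by lra. replace (p + r - p) with r in Heq by ring.
    nra.
Qed.

Lemma convex_factor_mul_le h : convex_factor h ->
  forall p q1 q2 r, 0 <= p -> p <= q1 -> p <= q2 -> q1 <= r -> q2 <= r -> r <= 1 ->
  p + r = q1 + q2 -> h p * h r <= h q1 * h q2.
Proof.
  intros [_ [_ [_ [Hpos [dh [HC Hlc]]]]]] p q1 q2 r H1 H2 H3 H4 H5 H6 Hs.
  destruct (Rle_or_lt q1 q2).
  - apply (logconcave_mul_le h dh HC Hpos Hlc); lra.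
  - rewrite (Rmult_comm (h q1)). apply (logconcave_mul_le h dh HC Hpos Hlc); lra.
Qed.

Lemma convex_factor_ge0 h x : convex_factor h -> in01 x -> 0 <= h x.
Proof. intros [H _] Hx. auto. Qed.

Lemma convex_factor_le h a b : convex_factor h -> in01 a -> in01 b -> a <= b -> h a <= h b.
Proof. intros [_ [H _]]. auto. Qed.

Lemma convex_factor_continuous h : convex_factor h -> forall x, continuous (fun x => h (clamp x)) x.
Proof. intros [_ [_ [_ [_ [dh [HC _]]]]]]. apply C1_continuous_clamp with dh. exact HC. Qed.

Section Kernel.
Variables (f g : nat -> R -> R) (e : nat).
Hypothesis Hf : convex_factor (f (Nat.div2 e)).
Hypothesis Hg : convex_factor (g (Nat.div2 e)).

Lemma kern_ge0 u w : 0 <= kern f g e u w.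
Proof.
  unfold kern. destruct (Nat.even e); apply Rmult_le_pos; try apply ind_01;
  apply convex_factor_ge0; auto; apply clamp_01.
Qed.

Lemma kern_le_max u w : kern f g e u w <= Rmax (f (Nat.div2 e) 1) (g (Nat.div2 e) 1).
Proof.
  assert (H1 : in01 1) by (red; lra).
  unfold kern.
  destruct (Nat.even e); [eapply Rle_trans; [|apply Rmax_l] | eapply Rle_trans; [|apply Rmax_r]];
  rewrite <- (Rmult_1_l (_ 1)); apply Rmult_le_compat; try apply ind_01;
  try apply convex_factor_ge0; try apply convex_factor_le; auto; try apply clamp_01;
  pose proof (clamp_01 (w - u)); pose proof (clamp_01 (u - w)); unfold in01 in *; lra.
Qed.

Lemma kern_TP2 u' u w1 w2 : in01 u' -> in01 u -> in01 w1 -> in01 w2 -> u' <= u -> w1 <= w2 ->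
  kern f g e u' w2 * kern f g e u w1 <= kern f g e u' w1 * kern f g e u w2.
Proof.
  intros [A1 A2] [B1 B2] [C1 C2] [D1 D2] Hu Hw.
  pose proof (kern_ge0 u' w1). pose proof (kern_ge0 u w2).
  unfold kern in *. destruct (Nat.even e); unfold Defs.ind in *.
  - destruct (Rle_dec u' w2), (Rle_dec u w1); try nra.
    destruct (Rle_dec u' w1), (Rle_dec u w2); try lra.
    rewrite !clamp_id by (red; lra).
    pose proof (convex_factor_mul_le _ Hf (w1 - u) (w1 - u') (w2 - u) (w2 - u')). nra.
  - destruct (Rle_dec w2 u'), (Rle_dec w1 u); try nra.
    destruct (Rle_dec w1 u'), (Rle_dec w2 u); try lra.
    rewrite !clamp_id by (red; lra).
    pose proof (convex_factor_mul_le _ Hg (u' - w2) (u' - w1) (u - w2) (u - w1)). nra.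
Qed.

Lemma kern_antitone_even u' u y : Nat.even e = true -> in01 u' -> in01 u -> in01 y -> u' <= u ->
  kern f g e u y <= kern f g e u' y.
Proof.
  intros He [A1 A2] [B1 B2] [C1 C2] Hu. pose proof (kern_ge0 u' y).
  unfold kern in *. rewrite He in *. unfold Defs.ind in *.
  destruct (Rle_dec u y), (Rle_dec u' y); try lra.
  rewrite !Rmult_1_l, !clamp_id by (red; lra). apply convex_factor_le; auto; red; lra.
Qed.

Lemma kern_monotone_odd u' u x : Nat.even e = false -> in01 u' -> in01 u -> in01 x -> u' <= u ->
  kern f g e u' x <= kern f g e u x.
Proof.
  intros He [A1 A2] [B1 B2] [C1 C2] Hu. pose proof (kern_ge0 u x).
  unfold kern in *. rewrite He in *. unfold Defs.ind in *.
  destruct (Rle_dec x u'), (Rle_dec x u); try lra.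
  rewrite !Rmult_1_l, !clamp_id by (red; lra). apply convex_factor_le; auto; red; lra.
Qed.

End Kernel.

(* If bt/a is nonincreasing and D changes sign at most once, from - to +,
   then the bounds of bt/a on the two sides of the crossing give a constant
   lam with bt D <= lam a D everywhere. *)
Lemma single_crossing_multiplier (bt a D : R -> R) :
  (forall u, in01 u -> 0 <= bt u <= a u) ->
  (forall u u', in01 u -> in01 u' -> u <= u' -> bt u' * a u <= bt u * a u') ->
  (forall u' u, in01 u' -> in01 u -> u' <= u -> 0 < D u' -> 0 <= D u) ->
  exists lam, forall u, in01 u -> bt u * D u <= lam * (a u * D u).
Proof.
  intros Hat Hmon SC.
  set (E := fun x => exists u, in01 u /\ 0 < a u /\ 0 < D u /\ x = bt u / a u).
  assert (Hratio : forall u, in01 u -> 0 < a u -> 0 <= bt u / a u <= 1).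
  { intros u Hu Ha. destruct (Hat u Hu). split; [apply Rdiv_le_0_compat; lra|].
    apply Rmult_le_reg_r with (a u); auto. unfold Rdiv. rewrite Rmult_assoc, Rinv_l; lra. }
  assert (Ha0 : forall u, in01 u -> a u = 0 \/ 0 < a u)
    by (intros u Hu; destruct (Hat u Hu); lra).
  destruct (classic (exists x, E x)) as [Ex|NE].
  - assert (Hb : bound E) by (exists 1; intros x [u [Hu [Ha [_ ->]]]]; apply Hratio; auto).
    destruct (completeness E Hb Ex) as [m [Hub Hlub]].
    exists m. intros u Hu. destruct (Hat u Hu) as [A1 A2].
    destruct (Ha0 u Hu) as [Ha|Ha]; [replace (bt u) with 0 by lra; rewrite Ha; lra|].
    destruct (Rtotal_order (D u) 0) as [Dn|[D0|Dp]].
    + assert (Hm : m <= bt u / a u).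
      { apply Hlub. intros x [u' [Hu' [Ha' [HD' ->]]]].
        assert (Hlt : u <= u') by (destruct (Rle_or_lt u u'); auto; pose proof (SC u' u Hu' Hu); lra).
        pose proof (Hmon u u' Hu Hu' Hlt).
        apply Rmult_le_reg_r with (a u' * a u); [nra|].
        replace (bt u' / a u' * (a u' * a u)) with (bt u' * a u) by (field; lra).
        replace (bt u / a u * (a u' * a u)) with (bt u * a u') by (field; lra). lra. }
      assert (m * a u <= bt u).
      { apply Rmult_le_reg_r with (/ a u); [apply Rinv_0_lt_compat; auto|].
        rewrite Rmult_assoc, Rinv_r by lra. lra. }
      nra.
    + rewrite D0. lra.
    + assert (Hm : bt u / a u <= m) by (apply Hub; exists u; auto).
      assert (bt u <= m * a u).
      { apply Rmult_le_reg_r with (/ a u); [apply Rinv_0_lt_compat; auto|].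
        rewrite Rmult_assoc, Rinv_r by lra. unfold Rdiv in Hm. lra. }
      nra.
  - exists 0. intros u Hu. destruct (Hat u Hu) as [A1 A2]. rewrite Rmult_0_l.
    destruct (Rle_or_lt (D u) 0); [nra|].
    destruct (Ha0 u Hu) as [Ha|Ha]; [replace (bt u) with 0 by lra; lra|].
    exfalso. apply NE. exists (bt u / a u), u. auto.
Qed.

Lemma RInt_ratio_crossing (bt a h1 h2 : R -> R) :
  (forall u, in01 u -> 0 <= bt u <= a u) ->
  (forall u u', in01 u -> in01 u' -> u <= u' -> bt u' * a u <= bt u * a u') ->
  (forall u, in01 u -> 0 <= h1 u /\ 0 <= h2 u) ->
  (forall u u', in01 u -> in01 u' -> u' <= u -> h2 u' * h1 u <= h1 u' * h2 u) ->
  ex_RInt (fun u => bt u * h1 u) 0 1 -> ex_RInt (fun u => bt u * h2 u) 0 1 ->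
  ex_RInt (fun u => a u * h1 u) 0 1 -> ex_RInt (fun u => a u * h2 u) 0 1 ->
  RInt (fun u => bt u * h2 u) 0 1 * RInt (fun u => a u * h1 u) 0 1 <=
  RInt (fun u => bt u * h1 u) 0 1 * RInt (fun u => a u * h2 u) 0 1.
Proof.
  intros Hat Hmon Hh Htp I1 I2 I3 I4.
  set (Z1 := (RInt (fun u => a u * h1 u) 0 1 : R)).
  set (Z2 := (RInt (fun u => a u * h2 u) 0 1 : R)).
  assert (HZ : 0 <= Z1 /\ 0 <= Z2).
  { split; apply RInt_ge_0; auto; try lra; intros x Hx;
    destruct (Hat x), (Hh x); try (red; lra); apply Rmult_le_pos; lra. }
  (* D = h2 Z1 - h1 Z2 integrates to 0 against a and crosses 0 once. *)
  set (D := fun u => h2 u * Z1 - h1 u * Z2).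
  assert (SC : forall u' u, in01 u' -> in01 u -> u' <= u -> 0 < D u' -> 0 <= D u).
  { intros u' u H' H Hle HD. unfold D in *.
    destruct (Hh u') as [A1 A2]; auto. destruct (Hh u) as [B1 B2]; auto.
    pose proof (Htp u u' H H' Hle) as T.
    assert (P2 : 0 < h2 u')
      by (destruct (Rle_lt_or_eq_dec 0 (h2 u')) as [?|E]; auto; rewrite <- E in HD; nra).
    assert (K : h2 u' * (h2 u * Z1 - h1 u * Z2) >= 0) by nra.
    destruct (Rle_or_lt 0 (h2 u * Z1 - h1 u * Z2)); auto. nra. }
  destruct (single_crossing_multiplier bt a D Hat Hmon SC) as [lam Hl].
  assert (Ibt : ex_RInt (fun u => Z1 * (bt u * h2 u) - Z2 * (bt u * h1 u)) 0 1)
    by (apply (ex_RInt_minus (fun u => Z1 * (bt u * h2 u)));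
        apply (ex_RInt_scal (V := R_NormedModule)); auto).
  assert (Ia : ex_RInt (fun u => Z1 * (a u * h2 u) - Z2 * (a u * h1 u)) 0 1)
    by (apply (ex_RInt_minus (fun u => Z1 * (a u * h2 u)));
        apply (ex_RInt_scal (V := R_NormedModule)); auto).
  assert (Hle : RInt (fun u => Z1 * (bt u * h2 u) - Z2 * (bt u * h1 u)) 0 1 <=
                RInt (fun u => lam * (Z1 * (a u * h2 u) - Z2 * (a u * h1 u))) 0 1).
  { apply RInt_le; auto; [lra | apply (ex_RInt_scal (V := R_NormedModule)); auto|].
    intros x Hx. pose proof (Hl x ltac:(red; lra)). unfold D in *. nra. }
  rewrite RInt_scal_R, !RInt_minus_R, !RInt_scal_R in Hle; auto;
    try apply (ex_RInt_scal (V := R_NormedModule)); auto.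
  fold Z1 Z2 in Hle. nra.
Qed.

Section Messages.
Variables (n : nat) (f g : nat -> R -> R) (s : nat) (t : R).
Hypothesis HCF : forall i, (i < n)%nat -> convex_factor (f i) /\ convex_factor (g i).

Notation num := (msg f g s t true).
Notation den := (msg f g s t false).

Lemma msg_cut b k : (k <= 2 * n)%nat -> cut_continuous (msg f g s t b k).
Proof.
  apply msg_cut_continuous. intros i Hi. destruct (HCF i Hi) as [Cf Cg].
  split; apply convex_factor_continuous; auto.
Qed.

Lemma ex_RInt_msg_kern b k w : (k < 2 * n)%nat ->
  ex_RInt (fun u => msg f g s t b k u * kern f g k u w) 0 1.
Proof.
  intro Hk. destruct (HCF _ (div2_lt k n Hk)) as [Cf Cg].
  destruct (kern_RInt_continuous f g k _ (convex_factor_continuous _ Cf)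
              (convex_factor_continuous _ Cg) (msg_cut b k ltac:(lia))) as [G [_ HG]].
  apply HG.
Qed.

Lemma ex_RInt_msg b k : (k <= 2 * n)%nat -> ex_RInt (fun u => msg f g s t b k u * 1) 0 1.
Proof.
  intro Hk. apply ex_RInt_ext with (msg f g s t b k); [intros; apply eq_sym, Rmult_1_r|].
  apply cut_continuous_ex_RInt, msg_cut, Hk.
Qed.

Lemma obs_01 b k w : 0 <= obs s t b k w <= 1.
Proof. unfold obs. destruct (b && Nat.eqb k (posX s))%bool; [apply ind_01 | lra]. Qed.

Lemma num_le_den : forall k, (k <= 2 * n)%nat -> forall u, in01 u -> 0 <= num k u <= den k u.
Proof.
  induction k as [|k IH]; intros Hk u Hu; cbn [msg]; change (obs s t false _ u) with 1.
  - pose proof (obs_01 true 0 u). lra.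
  - rewrite Rmult_1_r. destruct (HCF _ (div2_lt k n ltac:(lia))) as [Cf Cg].
    pose proof (obs_01 true (S k) u) as HI.
    assert (A : 0 <= Defs.RInt (fun v => num k v * kern f g k v u) 0 1).
    { apply RInt_def_ge0. intros v Hv. destruct (IH ltac:(lia) v ltac:(red; lra)).
      apply Rmult_le_pos; auto. apply kern_ge0; auto. }
    assert (B : Defs.RInt (fun v => num k v * kern f g k v u) 0 1 <=
                Defs.RInt (fun v => den k v * kern f g k v u) 0 1).
    { rewrite !RInt_def_ex by (apply ex_RInt_msg_kern; lia).
      apply RInt_le; try lra; try (apply ex_RInt_msg_kern; lia).
      intros v Hv. destruct (IH ltac:(lia) v ltac:(red; lra)).
      apply Rmult_le_compat_r; auto. apply kern_ge0; auto. }
    split; [apply Rmult_le_pos|]; nra.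
Qed.

Lemma num_eq_den_before : forall k, (k < posX s)%nat -> forall w, num k w = den k w.
Proof.
  induction k as [|k IH]; intros Hk w; cbn [msg]; unfold obs.
  - destruct (Nat.eqb_spec 0 (posX s)); [lia | reflexivity].
  - destruct (Nat.eqb_spec (S k) (posX s)); [lia|]. cbn [andb].
    do 2 f_equal. apply functional_extensionality; intro v. rewrite IH by lia. reflexivity.
Qed.

Lemma num_at_posX w : num (posX s) w = den (posX s) w * Defs.ind w t.
Proof.
  destruct (posX s) as [|k] eqn:E; cbn [msg]; unfold obs; rewrite E, Nat.eqb_refl; cbn [andb].
  - ring.
  - rewrite Rmult_1_r. do 2 f_equal. apply functional_extensionality; intro v.
    rewrite num_eq_den_before by lia. reflexivity.
Qed.

Lemma msg_next b m w : (S m <> posX s)%nat ->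
  msg f g s t b (S m) w = Defs.RInt (fun u => msg f g s t b m u * kern f g m u w) 0 1.
Proof.
  intro H. cbn [msg]. unfold obs. destruct (Nat.eqb_spec (S m) (posX s)); [lia|].
  rewrite Bool.andb_false_r. ring.
Qed.

(* num/den is nonincreasing: it starts as the indicator 1{w <= t} at X_s and
   each TP2 kernel preserves the property. *)
Lemma msg_ratio_antitone : forall k, (posX s <= k)%nat -> (k <= 2 * n)%nat ->
  forall u u', in01 u -> in01 u' -> u <= u' -> num k u' * den k u <= num k u * den k u'.
Proof.
  intros k H1. induction H1 as [|k H1 IH]; intros H2 u u' Hu Hu' Huu.
  - rewrite !num_at_posX. pose proof (num_le_den _ H2 u Hu). pose proof (num_le_den _ H2 u' Hu').
    unfold Defs.ind. destruct (Rle_dec u t), (Rle_dec u' t); try lra; nra.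
  - rewrite !msg_next by lia.
    destruct (HCF _ (div2_lt k n ltac:(lia))) as [Cf Cg].
    rewrite !RInt_def_ex by (apply ex_RInt_msg_kern; lia).
    apply (RInt_ratio_crossing (num k) (den k) (fun v => kern f g k v u) (fun v => kern f g k v u'));
      try (apply ex_RInt_msg_kern; lia).
    + intros v Hv. apply num_le_den; auto; lia.
    + intros v v' Hv Hv' Hvv. apply IH; auto; lia.
    + intros v Hv. split; apply kern_ge0; auto.
    + intros v v' Hv Hv' Hvv. apply kern_TP2; auto.
Qed.

Lemma condCDF_msg j v : (posX s <= j)%nat -> (j <= 2 * n)%nat -> in01 v -> 0 < condDen n f g j v ->
  condCDF n f g s j v t = num j v / den j v /\ 0 < den j v.
Proof.
  intros H1 H2 Hv Hd. destruct (cond_msg n f g s t j v H1 H2 Hv) as [E1 E2].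
  unfold condCDF. rewrite E1, E2. rewrite E2 in Hd.
  assert (Hr : right_weight n f g j v <> 0) by (intro E; rewrite E in Hd; lra).
  assert (Hden : den j v <> 0) by (intro E; rewrite E in Hd; lra).
  split; [field; auto|]. pose proof (num_le_den j H2 v Hv). lra.
Qed.

Lemma condCDF_antitone j x1 x2 : (posX s <= j)%nat -> (j <= 2 * n)%nat ->
  in01 x1 -> in01 x2 -> x1 <= x2 -> 0 < condDen n f g j x1 -> 0 < condDen n f g j x2 ->
  condCDF n f g s j x2 t <= condCDF n f g s j x1 t.
Proof.
  intros H1 H2 Hx1 Hx2 Hx D1 D2.
  destruct (condCDF_msg j x1 H1 H2 Hx1 D1) as [-> P1].
  destruct (condCDF_msg j x2 H1 H2 Hx2 D2) as [-> P2].
  apply Rdiv_le_cross; auto. apply msg_ratio_antitone; auto.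
Qed.

Lemma condCDF_next m v : (posX s <= m)%nat -> (m < 2 * n)%nat -> in01 v ->
  0 < condDen n f g (S m) v ->
  condCDF n f g s (S m) v t =
    RInt (fun u => num m u * kern f g m u v) 0 1 / RInt (fun u => den m u * kern f g m u v) 0 1 /\
  0 < RInt (fun u => den m u * kern f g m u v) 0 1.
Proof.
  intros H1 H2 Hv D. destruct (condCDF_msg (S m) v ltac:(lia) ltac:(lia) Hv D) as [-> P].
  rewrite !msg_next, !RInt_def_ex in * by (lia || apply ex_RInt_msg_kern; lia). auto.
Qed.

Lemma truncCDF_RInt m : (posX s <= m)%nat -> (m <= 2 * n)%nat ->
  truncCDF f g m s t = RInt (fun u => num m u * 1) 0 1 / RInt (fun u => den m u * 1) 0 1.
Proof.
  intros H1 H2.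
  rewrite truncCDF_msg, !RInt_def_ex by (auto; apply cut_continuous_ex_RInt, msg_cut; auto).
  f_equal; apply RInt_ext; intros; apply eq_sym, Rmult_1_r.
Qed.

Lemma RInt_den_pos m v : (m < 2 * n)%nat -> 0 < RInt (fun u => den m u * kern f g m u v) 0 1 ->
  0 < RInt (fun u => den m u * 1) 0 1.
Proof.
  intros Hm Hpos. destruct (HCF _ (div2_lt m n Hm)) as [Cf Cg].
  set (M := Rmax (f (Nat.div2 m) 1) (g (Nat.div2 m) 1)).
  assert (Hle : RInt (fun u => den m u * kern f g m u v) 0 1 <= M * RInt (fun u => den m u * 1) 0 1).
  { rewrite <- RInt_scal_R by (apply ex_RInt_msg; lia).
    apply RInt_le; [lra | apply ex_RInt_msg_kern; lia |
                    apply (ex_RInt_scal (V := R_NormedModule)), ex_RInt_msg; lia |].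
    intros u Hu. pose proof (num_le_den m ltac:(lia) u ltac:(red; lra)).
    pose proof (kern_le_max f g m Cf Cg u v) as K. fold M in K. nra. }
  assert (HM : 0 <= M).
  { pose proof (kern_ge0 f g m Cf Cg 0 v). pose proof (kern_le_max f g m Cf Cg 0 v) as K.
    fold M in K. lra. }
  destruct (Rle_or_lt (RInt (fun u => den m u * 1) 0 1) 0); [nra | auto].
Qed.

Lemma RInt_msg_ratio_le m (h1 h2 : R -> R) : (posX s <= m)%nat -> (m <= 2 * n)%nat ->
  (forall u, in01 u -> 0 <= h1 u /\ 0 <= h2 u) ->
  (forall u u', in01 u -> in01 u' -> u' <= u -> h2 u' * h1 u <= h1 u' * h2 u) ->
  (forall b, ex_RInt (fun u => msg f g s t b m u * h1 u) 0 1) ->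
  (forall b, ex_RInt (fun u => msg f g s t b m u * h2 u) 0 1) ->
  0 < RInt (fun u => den m u * h1 u) 0 1 -> 0 < RInt (fun u => den m u * h2 u) 0 1 ->
  RInt (fun u => num m u * h2 u) 0 1 / RInt (fun u => den m u * h2 u) 0 1 <=
  RInt (fun u => num m u * h1 u) 0 1 / RInt (fun u => den m u * h1 u) 0 1.
Proof.
  intros H1 H2 Hh Htp I1 I2 P1 P2. apply Rdiv_le_cross; auto.
  apply RInt_ratio_crossing; auto.
  - intros u Hu. apply num_le_den; auto.
  - intros u u' Hu Hu' Huu. apply msg_ratio_antitone; auto.
Qed.

(* For even m the last kernel 1{u <= w} f(w - u) is nonincreasing in u, so it
   moves weight to the left compared with the truncated model. *)
Lemma truncCDF_le_condCDF_next m y : Nat.even m = true -> (posX s <= m)%nat -> (m < 2 * n)%nat ->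
  in01 y -> 0 < condDen n f g (S m) y ->
  truncCDF f g m s t <= condCDF n f g s (S m) y t.
Proof.
  intros He H1 H2 Hy D. destruct (HCF _ (div2_lt m n H2)) as [Cf Cg].
  destruct (condCDF_next m y H1 H2 Hy D) as [-> P].
  rewrite truncCDF_RInt by lia.
  apply RInt_msg_ratio_le; auto; try lia.
  - intros u Hu. split; [apply kern_ge0 | lra]; auto.
  - intros u u' Hu Hu' Huu. rewrite Rmult_1_l, Rmult_1_r. apply kern_antitone_even; auto.
  - intro b. apply ex_RInt_msg_kern; lia.
  - intro b. apply ex_RInt_msg; lia.
  - apply (RInt_den_pos m y); auto.
Qed.

Lemma condCDF_next_le_truncCDF m x : Nat.even m = false -> (posX s <= m)%nat -> (m < 2 * n)%nat ->
  in01 x -> 0 < condDen n f g (S m) x ->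
  condCDF n f g s (S m) x t <= truncCDF f g m s t.
Proof.
  intros He H1 H2 Hx D. destruct (HCF _ (div2_lt m n H2)) as [Cf Cg].
  destruct (condCDF_next m x H1 H2 Hx D) as [-> P].
  rewrite truncCDF_RInt by lia.
  apply RInt_msg_ratio_le; auto; try lia.
  - intros u Hu. split; [lra | apply kern_ge0]; auto.
  - intros u u' Hu Hu' Huu. rewrite Rmult_1_l, Rmult_1_r. apply kern_monotone_odd; auto.
  - intro b. apply ex_RInt_msg; lia.
  - intro b. apply ex_RInt_msg_kern; lia.
  - apply (RInt_den_pos m x); auto.
Qed.

End Messages.

Theorem mainTheorem6 (n : nat) (f g : nat -> R -> R) (s r : nat) (t : R) :
  (1 <= n)%nat ->
  (forall i, (i < n)%nat -> convex_factor (f i) /\ convex_factor (g i)) ->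
  (1 <= s)%nat -> (s <= r)%nat -> in01 t ->
  ((r <= n + 1)%nat ->
     forall x1 x2, in01 x1 -> in01 x2 -> x1 <= x2 ->
       0 < condDen n f g (posX r) x1 -> 0 < condDen n f g (posX r) x2 ->
       condCDF n f g s (posX r) x2 t <= condCDF n f g s (posX r) x1 t) /\
  ((r <= n)%nat ->
     (forall y1 y2, in01 y1 -> in01 y2 -> y1 <= y2 ->
        0 < condDen n f g (posY r) y1 -> 0 < condDen n f g (posY r) y2 ->
        condCDF n f g s (posY r) y2 t <= condCDF n f g s (posY r) y1 t) /\
     (forall y, in01 y -> 0 < condDen n f g (posY r) y ->
        truncCDF f g (posX r) s t <= condCDF n f g s (posY r) y t) /\
     (forall x, in01 x -> 0 < condDen n f g (posX (r + 1)) x ->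
        condCDF n f g s (posX (r + 1)) x t <= truncCDF f g (posY r) s t)).
Proof.
  intros Hn HCF Hs Hsr Ht.
  split; [intros; apply (condCDF_antitone n f g s t HCF); auto; unfold posX; lia|].
  intro Hr.
  assert (EY : posY r = S (posX r)) by (unfold posX, posY; lia).
  assert (EX : posX (r + 1) = S (posY r)) by (unfold posX, posY; lia).
  assert (Hev : Nat.even (posX r) = true) by (unfold posX; rewrite Nat.even_mul; reflexivity).
  assert (Hodd : Nat.even (posY r) = false)
    by (rewrite EY; unfold posX; rewrite Nat.even_succ, Nat.odd_mul; reflexivity).
  split; [|split].
  - intros; apply (condCDF_antitone n f g s t HCF); auto; unfold posX, posY; lia.
  - intros y Hy D. rewrite EY in *.
    apply (truncCDF_le_condCDF_next n f g s t HCF); auto; unfold posX; lia.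
  - intros x Hx D. rewrite EX in *.
    apply (condCDF_next_le_truncCDF n f g s t HCF); auto; unfold posX, posY; lia.
Qed.
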